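(* Let $A\in\mathbb{C}^{D\times D}$, let $T>0$, $t\in[0,T]$, and $u_0\in\mathbb{C}^D$. Suppose $A$ admits the Cartesian decomposition $$A=L+iH,\qquad L\equiv\frac{A+A^\dagger}{2}\succeq 0,\qquad H\equiv\frac{A-A^\dagger}{2i}.$$ Then the solution $\ket{u(t)}=e^{-At}\ket{u_0}$ of $\frac{\mathrm{d}u}{\mathrm{d}t}=-Au$, $u(0)=u_0$, admits the continuous-discrete variable LCHS representation $$\ket{u(t)}=(\bra{\phi}_{\rm osc}\otimes\mathbb I_q)\,e^{-it(\hat{x}\otimes L+\mathbb I_{\rm osc}\otimes H)}\,(\ket{\psi}_{\rm osc}\otimes\ket{u_0}_q),$$ where the oscillator states $\ket{\psi}_{\rm osc}=\int_{\mathbb R}\psi(x)\ket{x}\,\mathrm{d}x$ and $\ket{\phi}_{\rm osc}=\int_{\mathbb R}\phi(x)\ket{x}\,\mathrm{d}x$ satisfy $$\phi^*(x)\psi(x)=\frac{f(x)}{1-ix}\equiv g(x)\quad\text{for all }x\in\mathbb R,$$ with $f$ an LCHS kernel function.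
   Context: The oscillator is a single bosonic mode with Hilbert space $L^2(\mathbb R)$; $\hat x$ is its position quadrature with generalized eigenbasis $\{\ket{x}\}_{x\in\mathbb R}$, $\hat x=\int_{\mathbb R}x\ket{x}\bra{x}\,\mathrm{d}x$, $\braket{x'|x}=\delta(x-x')$. The qubit register is $\mathbb{C}^D$ and $\mathbb I_q$, $\mathbb I_{\rm osc}$ denote identities. An LCHS kernel function $f$ (in the sense of the linear combination of Hamiltonian simulation method) is a function on $\mathbb R$ such that, with $g(k)=f(k)/(1-ik)$, the identity $e^{-t(L+iH)}=\int_{\mathbb R}g(k)\,e^{-it(kL+H)}\,\mathrm{d}k$ holds for all Hermitian $L\succeq0$, Hermitian $H$, and $t\ge0$; an example is $g(k)=\frac{e^{2^\beta}}{2\pi(1-ik)e^{(1+ik)^\beta}}$ with $\beta\in(0,1)$ (principal branch). *)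

From HB Require Import structures.
From mathcomp Require Import all_boot all_order all_algebra.
From mathcomp Require Import all_classical all_reals all_analysis.
From mathcomp Require Import complex.
Set Implicit Arguments. Unset Strict Implicit. Unset Printing Implicit Defensive.
Import Order.TTheory GRing.Theory Num.Theory.
Import numFieldNormedType.Exports.
Local Open Scope ring_scope.
Local Open Scope complex_scope.

Section LCHSDefs.
Variable R : realType.
Local Notation C := (R[i]).

Definition reC (z : C) : R := complex.Re z.
Definition imC (z : C) : R := complex.Im z.

Definition limC (u : nat -> C) : C :=
  (limn (fun n => reC (u n))) +i* (limn (fun n => imC (u n))).

Definition expm (D : nat) (M : 'M[C]_D) : 'M[C]_D :=
  \matrix_(i, j) limC (fun n => (\sum_(k < n) ((k`!)%:R)^-1 *: (M ^+ k)) i j).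

Definition adjmx (m n : nat) (M : 'M[C]_(m, n)) : 'M[C]_(n, m) :=
  map_mx (fun z => z^*) M^T.

Definition hermitian (D : nat) (M : 'M[C]_D) : Prop := adjmx M = M.

Definition psd (D : nat) (M : 'M[C]_D) : Prop :=
  hermitian M /\ forall v : 'cV[C]_D, 0 <= (adjmx v *m M *m v) 0 0.

Definition Cintegrable (h : R -> C) : Prop :=
  (lebesgue_measure : set R -> \bar R).-integrable setT (fun x => (reC (h x))%:E) /\
  (lebesgue_measure : set R -> \bar R).-integrable setT (fun x => (imC (h x))%:E).

Definition Cint (h : R -> C) : C :=
  (Rintegral (lebesgue_measure : set R -> \bar R) setT (fun x => reC (h x)))
  +i* (Rintegral (lebesgue_measure : set R -> \bar R) setT (fun x => imC (h x))).

Definition L2fun (psi : R -> C) : Prop :=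
  measurable_fun setT (fun x => reC (psi x)) /\
  measurable_fun setT (fun x => imC (psi x)) /\
  (lebesgue_measure : set R -> \bar R).-integrable setT
     (fun x => (reC (psi x) ^+ 2 + imC (psi x) ^+ 2)%:E).

Definition lchs_g (f : R -> C) (k : R) : C := f k / (1 - 'i * k%:C).

Definition LCHS_kernel (f : R -> C) : Prop :=
  forall (D : nat) (L H : 'M[C]_D) (t : R),
    psd L -> hermitian H -> 0 <= t ->
    forall i j,
      Cintegrable (fun k => lchs_g f k * expm (- ('i * t%:C) *: (k%:C *: L + H)) i j) /\
      Cint (fun k => lchs_g f k * expm (- ('i * t%:C) *: (k%:C *: L + H)) i j)
      = expm (- t%:C *: (L + 'i *: H)) i j.

(* Oscillator (x) qubit-register space L^2(R) (x) C^D is identified with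
   L^2(R; C^D): a state is a function x |-> Psi(x) in C^D. *)

Definition tens_state (D : nat) (psi : R -> C) (u0 : 'cV[C]_D) : R -> 'cV[C]_D :=
  fun x => psi x *: u0.

(* e^{-it(xhat (x) L + I (x) H)}: the generator is decomposable in the
   position representation (xhat acts as multiplication by x on |x>), so the
   unitary acts on the fibre over x by e^{-it(xL+H)}. *)
Definition osc_evol (D : nat) (t : R) (L H : 'M[C]_D) (Psi : R -> 'cV[C]_D)
  : R -> 'cV[C]_D :=
  fun x => expm (- ('i * t%:C) *: (x%:C *: L + H)) *m Psi x.

Definition bra_osc (D : nat) (phi : R -> C) (Psi : R -> 'cV[C]_D) : 'cV[C]_D :=
  \col_(i < D) Cint (fun x => (phi x)^* * Psi x i 0).

End LCHSDefs.

(* In the position representation the generator x (x) L + I (x) H acts on the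
   fibre over x as xL + H, so applying <phi| (x) I to the evolved product state
   gives the vector integral of phi(x)^* psi(x) e^{-it(xL+H)} u0 = g(x)
   e^{-it(xL+H)} u0.  Entrywise integration commutes with multiplication by the
   constant vector u0, and since A = L + iH with H Hermitian and L >= 0, the
   defining identity of an LCHS kernel evaluates the matrix integral
   int g(k) e^{-it(kL+H)} dk to e^{-t(L+iH)} = e^{-tA}. *)

From Pilot Require Import Defs.
From HB Require Import structures.
From mathcomp Require Import all_boot all_order all_algebra.
From mathcomp Require Import all_classical all_reals all_analysis.
From mathcomp Require Import complex.
From mathcomp Require Import ring.
Set Implicit Arguments. Unset Strict Implicit. Unset Printing Implicit Defensive.
Import Order.TTheory GRing.Theory Num.Theory.
Local Open Scope ring_scope.
Local Open Scope complex_scope.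

Section ComplexIntegral.
Context {d} {T : measurableType d} {R : realType}.
Variables (mu : {measure set T -> \bar R}) (D : set T).
Hypothesis mD : measurable D.
Local Notation C := R[i].

Definition cintegrable (h : T -> C) : Prop :=
  mu.-integrable D (fun x => (reC (h x))%:E) /\
  mu.-integrable D (fun x => (imC (h x))%:E).

Definition cint (h : T -> C) : C :=
  Rintegral mu D (fun x => reC (h x)) +i* Rintegral mu D (fun x => imC (h x)).

Let integrable_scale (a : R) (f : T -> R) :
  mu.-integrable D (fun x => (f x)%:E) -> mu.-integrable D (fun x => (a * f x)%:E).
Proof.
by move=> hf; have := integrableZl mD a hf; apply: eq_integrable => // x _ /=.
Qed.

Let integrable_lincomb (a b : R) (f g : T -> R) :
  mu.-integrable D (fun x => (f x)%:E) -> mu.-integrable D (fun x => (g x)%:E) ->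
  mu.-integrable D (fun x => (a * f x + b * g x)%:E).
Proof.
move=> hf hg; have := integrableD mD (integrable_scale a hf) (integrable_scale b hg).
by apply: eq_integrable => // x _ /=.
Qed.

Let Rintegral_lincomb (a b : R) (f g : T -> R) :
  mu.-integrable D (fun x => (f x)%:E) -> mu.-integrable D (fun x => (g x)%:E) ->
  Rintegral mu D (fun x => a * f x + b * g x) =
  a * Rintegral mu D f + b * Rintegral mu D g.
Proof.
by move=> hf hg; rewrite RintegralD ?RintegralZl //; exact: integrable_scale.
Qed.

Let reC_mulr (z c : C) : reC (z * c) = reC c * reC z + (- imC c) * imC z.
Proof. by case: z c => a b [cr ci]; rewrite /reC /imC /=; ring. Qed.

Let imC_mulr (z c : C) : imC (z * c) = imC c * reC z + reC c * imC z.
Proof. by case: z c => a b [cr ci]; rewrite /reC /imC /=; ring. Qed.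

Let reC_add (z w : C) : reC (z + w) = 1 * reC z + 1 * reC w.
Proof. by case: z w => a b [c e]; rewrite /reC /=; ring. Qed.

Let imC_add (z w : C) : imC (z + w) = 1 * imC z + 1 * imC w.
Proof. by case: z w => a b [c e]; rewrite /imC /=; ring. Qed.

Lemma cintegrable0 : cintegrable (fun=> 0).
Proof. by split; exact: integrable0. Qed.

Lemma cint0 : cint (fun=> 0) = 0.
Proof. by rewrite /cint /reC /imC /= !Rintegral_cst // !mul0r. Qed.

Lemma cintegrableD (h1 h2 : T -> C) : cintegrable h1 -> cintegrable h2 ->
  cintegrable (fun x => h1 x + h2 x).
Proof.
move=> [r1 i1] [r2 i2]; split.
- by under eq_fun do rewrite reC_add; exact: integrable_lincomb.
- by under eq_fun do rewrite imC_add; exact: integrable_lincomb.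
Qed.

Lemma cintD (h1 h2 : T -> C) : cintegrable h1 -> cintegrable h2 ->
  cint (fun x => h1 x + h2 x) = cint h1 + cint h2.
Proof.
move=> [r1 i1] [r2 i2]; rewrite /cint.
under eq_Rintegral do rewrite reC_add.
under [X in _ +i* X]eq_Rintegral do rewrite imC_add.
by rewrite !Rintegral_lincomb // !mul1r.
Qed.

Lemma cintegrable_mulr (h : T -> C) (c : C) : cintegrable h ->
  cintegrable (fun x => h x * c).
Proof.
move=> [hr hi]; split.
- by under eq_fun do rewrite reC_mulr; exact: integrable_lincomb.
- by under eq_fun do rewrite imC_mulr; exact: integrable_lincomb.
Qed.

Lemma cint_mulr (h : T -> C) (c : C) : cintegrable h ->
  cint (fun x => h x * c) = cint h * c.
Proof.
move=> [hr hi]; rewrite /cint.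
under eq_Rintegral do rewrite reC_mulr.
under [X in _ +i* X]eq_Rintegral do rewrite imC_mulr.
rewrite !Rintegral_lincomb //; case: c => cr ci; rewrite /reC /imC /=.
by congr (_ +i* _); ring.
Qed.

Lemma cintegrable_sum (I : Type) (s : seq I) (F : I -> T -> C) :
  (forall i, cintegrable (F i)) -> cintegrable (fun x => \sum_(i <- s) F i x).
Proof.
move=> hF; elim: s => [|a s IHs].
  by under eq_fun do rewrite big_nil; exact: cintegrable0.
by under eq_fun do rewrite big_cons; exact: cintegrableD.
Qed.

Lemma cint_sum (I : Type) (s : seq I) (F : I -> T -> C) :
  (forall i, cintegrable (F i)) ->
  cint (fun x => \sum_(i <- s) F i x) = \sum_(i <- s) cint (F i).
Proof.
move=> hF; elim: s => [|a s IHs].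
  by under eq_fun do rewrite big_nil; rewrite big_nil cint0.
under eq_fun do rewrite big_cons.
by rewrite big_cons cintD ?IHs //; exact: cintegrable_sum.
Qed.

Definition cintmx (m n : nat) (M : T -> 'M[C]_(m, n)) : 'M[C]_(m, n) :=
  \matrix_(i, j) cint (fun x => M x i j).

Lemma cintmx_mulmxr (m n p : nat) (M : T -> 'M[C]_(m, n)) (B : 'M[C]_(n, p)) :
  (forall i j, cintegrable (fun x => M x i j)) ->
  cintmx (fun x => M x *m B) = cintmx M *m B.
Proof.
move=> hM; apply/matrixP => i k; rewrite !mxE.
under eq_fun do rewrite mxE.
rewrite cint_sum; last by move=> j; exact: cintegrable_mulr.
by apply: eq_bigr => j _; rewrite mxE cint_mulr.
Qed.

End ComplexIntegral.

Section ConjugateTranspose.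
Variable R : realType.
Local Notation C := R[i].

Lemma adjmxB m n (M N : 'M[C]_(m, n)) : adjmx (M - N) = adjmx M - adjmx N.
Proof. by apply/matrixP => i j; rewrite !mxE rmorphB. Qed.

Lemma adjmxZ m n (c : C) (M : 'M[C]_(m, n)) : adjmx (c *: M) = c^* *: adjmx M.
Proof. by apply/matrixP => i j; rewrite !mxE rmorphM. Qed.

Lemma adjmxK m n (M : 'M[C]_(m, n)) : adjmx (adjmx M) = M.
Proof. by apply/matrixP => i j; rewrite !mxE conjcK. Qed.

(* Qualified: a bare [hermitian] is MathComp's notation for sesquilinear forms. *)
Lemma hermitian_imaginary_part n (A : 'M[C]_n) :
  Defs.hermitian ((2%:R * 'i)^-1 *: (A - adjmx A)).
Proof.
rewrite /Defs.hermitian adjmxZ adjmxB adjmxK fmorphV rmorphM rmorph_nat /= conjCi.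
by rewrite mulrN invrN scaleNr -scalerN opprB.
Qed.

Lemma cartesian_decomposition n (A : 'M[C]_n) :
  A = (2%:R)^-1 *: (A + adjmx A) + 'i *: ((2%:R * 'i)^-1 *: (A - adjmx A)).
Proof.
by apply/matrixP => i j; rewrite !mxE; field; exact: neq0Ci.
Qed.

End ConjugateTranspose.

Section LebesgueComplexIntegral.
Variable R : realType.
Local Notation mu := (lebesgue_measure : set R -> \bar R).

Let lebesgueR : {measure set R -> \bar R} :=
  HB.pack mu (isMeasure.Build _ R R mu (measure0 (@lebesgue_measure R))
    (measure_ge0 (@lebesgue_measure R))
    (@measure_semi_sigma_additive _ _ _ (@lebesgue_measure R))).

(* [Cintegrable] is stated on the canonical measurable structure of [R], while
   [lebesgue_measure] and [Cint] live on [measurableTypeR R]: the two carry the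
   same sigma-algebra under different displays, and integrability is
   transported along the identity as a pushforward. *)
Let integrable_lebesgue_measure (f : R -> \bar R) :
  mu.-integrable setT f -> (@lebesgue_measure R).-integrable [set: measurableTypeR R] f.
Proof.
move=> intf.
have mid : measurable_fun [set: R] (id : R -> measurableTypeR R).
  by move=> _ Y mY; rewrite setTI.
apply: (@integrable_pushforward _ _ _ _ _ _ mid lebesgueR _ f _ intf measurableT).
by case/integrableP: intf => mf _ ? Y mY; exact: mf.
Qed.

Lemma Cintegrable_lebesgue (h : R -> R[i]) :
  Cintegrable h -> cintegrable (@lebesgue_measure R) setT h.
Proof. by case=> intre intim; split; exact: integrable_lebesgue_measure. Qed.

Lemma Cint_lebesgue (h : R -> R[i]) : Cint h = cint (@lebesgue_measure R) setT h.
Proof. by []. Qed.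

End LebesgueComplexIntegral.

Theorem theorem1 (R : realType) (D : nat) (A : 'M[R[i]]_D) (T t : R)
  (u0 : 'cV[R[i]]_D) (f psi phi : R -> R[i]) :
  let L := (2%:R)^-1 *: (A + adjmx A) in
  let H := (2%:R * 'i)^-1 *: (A - adjmx A) in
  0 < T -> 0 <= t -> t <= T ->
  psd L ->
  LCHS_kernel f ->
  L2fun psi -> L2fun phi ->
  (forall x : R, (phi x)^* * psi x = lchs_g f x) ->
  expm (- t%:C *: A) *m u0 =
  bra_osc phi (osc_evol t L H (tens_state psi u0)).
Proof.
(* Only the product phi^* psi = g matters: T and square integrability are unused. *)
move=> L H _ t_ge0 _ psdL kernel _ _ phi_psi.
pose G x := lchs_g f x *: expm (- ('i * t%:C) *: (x%:C *: L + H)).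
have decA : A = L + 'i *: H := cartesian_decomposition A.
have lchs i j := kernel D L H t psdL (hermitian_imaginary_part A) t_ge0 i j.
have G_int i j : cintegrable (@lebesgue_measure R) setT (fun x => G x i j).
  by under eq_fun do rewrite mxE; exact/Cintegrable_lebesgue/(lchs i j).1.
have intG : cintmx (@lebesgue_measure R) setT G = expm (- t%:C *: A).
  apply/matrixP => i j; rewrite mxE decA -(lchs i j).2.
  by rewrite Cint_lebesgue; under eq_fun do rewrite mxE.
have -> : bra_osc phi (osc_evol t L H (tens_state psi u0)) =
          cintmx (@lebesgue_measure R) setT (fun x => G x *m u0).
  apply/matrixP => i j; rewrite !mxE (ord1 j) Cint_lebesgue; congr cint.
  apply: funext => x; rewrite /osc_evol /tens_state -scalemxAr -scalemxAl !mxE.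
  by rewrite -phi_psi mulrA.
by rewrite cintmx_mulmxr // intG.
Qed.
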